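(* Let $0<\alpha\le \frac12$. Then the Ces\`aro operator $\mathcal{C}$ is bounded on the Korenblum space $H^\infty_\alpha$, and its operator norm satisfies $$\|\mathcal{C}\|_{H^\infty_\alpha\to H^\infty_\alpha}=\frac{1}{\alpha}.$$
   Context: $\mathbb{D}$ is the open unit disc and $H(\mathbb{D})$ the space of analytic functions on $\mathbb{D}$. For $f(z)=\sum_{k\ge0}a_kz^k\in H(\mathbb{D})$ the Ces\`aro operator is $\mathcal{C}(f)(z)=\sum_{n\ge0}\Big(\frac{1}{n+1}\sum_{k=0}^n a_k\Big)z^n=\int_0^1\frac{f(tz)}{1-tz}\,dt$. For $0<\alpha<1$, the Korenblum space $H^\infty_\alpha$ consists of $f\in H(\mathbb{D})$ with $\|f\|_{H^\infty_\alpha}=\sup_{z\in\mathbb{D}}(1-|z|^2)^\alpha|f(z)|<\infty$. Operator norms are $\|\mathcal{C}\|_{X\to Y}=\sup\{\|\mathcal{C}f\|_Y:\|f\|_X\le 1\}$. *)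

From Stdlib Require Import Reals.
From Coquelicot Require Import Coquelicot.
Open Scope R_scope.

(** An analytic function on the unit disc is represented by its Taylor
    coefficients a : nat -> C, required to give a power series converging
    at every point of the open unit disc. *)
Definition analytic_disc (a : nat -> C) : Prop :=
  forall z : C, Cmod z < 1 -> ex_series (fun k => Cmult (a k) (pow_n z k)).

(** Value f(z) = sum_k a_k z^k (meaningful when the series converges). *)
Definition eval_ps (a : nat -> C) (z : C) : C :=
  (Series (fun k => Re (Cmult (a k) (pow_n z k))),
   Series (fun k => Im (Cmult (a k) (pow_n z k)))).

Definition cesaro (a : nat -> C) : nat -> C :=
  fun n => Cdiv (sum_n a n) (RtoC (INR (S n))).

Definition korenblum_norm (alpha : R) (a : nat -> C) : Rbar :=
  Lub_Rbar (fun x => exists z : C, Cmod z < 1 /\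
     x = Rpower (1 - (Cmod z) ^ 2) alpha * Cmod (eval_ps a z)).

Definition cesaro_opnorm (alpha : R) : Rbar :=
  Lub_Rbar (fun x => exists a : nat -> C, analytic_disc a /\
     Rbar_le (korenblum_norm alpha a) 1 /\
     korenblum_norm alpha (cesaro a) = Finite x).

(* Since C f (z) = int_0^1 f (t z) / (1 - t z) dt, the bound (1 - |w|^2)^alpha |f (w)| <= M gives
   |f (t z) / (1 - t z)| <= M (1 - s^2)^(-alpha) / (1 - s) with s = t |z|.  For alpha <= 1/2
   this is at most the t-derivative of M t (1 - s^2)^(-alpha) / alpha, so integrating over
   [0, 1] yields (1 - |z|^2)^alpha |C f (z)| <= M / alpha; the comparison of the two
   integrals is done by the mean value theorem.
   Sharpness: f = 2^(-alpha) (1 - z)^(-alpha) has norm <= 1 and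
   C f (r) = 2^(-alpha) ((1 - r)^(-alpha) - 1) / (alpha r), so that
   (1 - r^2)^alpha C f (r) tends to 1 / alpha as r -> 1. *)

From Stdlib Require Import Reals.
From Coquelicot Require Import Coquelicot.
From Stdlib Require Import Lra Lia.
Open Scope R_scope.

Lemma le_sub_of_is_derive_le (f g f' g' : R -> R) (a b : R) : a <= b ->
  (forall t, a <= t <= b -> is_derive f t (f' t)) ->
  (forall t, a <= t <= b -> is_derive g t (g' t)) ->
  (forall t, a <= t <= b -> f' t <= g' t) ->
  f b - f a <= g b - g a.
Proof.
  intros Hab Hf Hg Hle.
  assert (Hd : forall t, a <= t <= b -> is_derive (fun x => g x - f x) t (g' t - f' t)).
  { intros t Ht; apply (is_derive_minus g f); [apply Hg | apply Hf]; exact Ht. }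
  destruct (MVT_gen (fun x => g x - f x) a b (fun t => g' t - f' t)) as [c [Hc Hmvt]];
    rewrite Rmin_left, Rmax_right in * by exact Hab.
  - intros t Ht; apply Hd; lra.
  - intros t Ht; apply continuity_pt_filterlim, (ex_derive_continuous (fun x => g x - f x)).
    eexists; apply Hd; exact Ht.
  - specialize (Hle c Hc). nra.
Qed.

Lemma eq_sub_of_is_derive_eq (f g f' : R -> R) (a b : R) : a <= b ->
  (forall t, a <= t <= b -> is_derive f t (f' t)) ->
  (forall t, a <= t <= b -> is_derive g t (f' t)) ->
  f b - f a = g b - g a.
Proof.
  intros Hab Hf Hg.
  apply Rle_antisym; apply (le_sub_of_is_derive_le _ _ f' f'); auto; intros; lra.
Qed.

Lemma mul_unit_interval (t r : R) : 0 <= t <= 1 -> 0 <= r < 1 -> 0 <= t * r < 1.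
Proof.
  intros Ht Hr. split; [apply Rmult_le_pos; lra |].
  apply Rle_lt_trans with (1 * r); [apply Rmult_le_compat_r |]; lra.
Qed.

Lemma le_of_forall_one_sub_sq_mul_le (c L : R) :
  (forall eta, 0 < eta < 1 -> (1 - eta) ^ 2 * c <= L) -> c <= L.
Proof.
  intros H. apply Rnot_lt_le. intros Hlt.
  pose proof (H (1 / 2) ltac:(lra)) as Hhalf.
  assert (Hc : 0 < c) by lra.
  set (eta := (c - L) / (4 * c)).
  assert (Heta : 4 * c * eta = c - L) by (unfold eta; field; lra).
  assert (Heta0 : 0 < eta) by (apply Rdiv_lt_0_compat; lra).
  assert (Heta1 : eta < 1) by nra.
  specialize (H eta (conj Heta0 Heta1)).
  assert (0 <= eta ^ 2 * c) by (apply Rmult_le_pos; nra).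
  nra.
Qed.

Lemma le_Rpower_self (x a : R) : 0 < x <= 1 -> 0 <= a <= 1 -> x <= Rpower x a.
Proof.
  intros Hx Ha. apply Rnot_lt_le. intros Hlt.
  apply ln_increasing in Hlt; [| apply exp_pos].
  rewrite ln_Rpower in Hlt.
  assert (ln x <= 0) by (rewrite <- ln_1; apply ln_le; lra).
  nra.
Qed.

Lemma Rpower_base_1 (a : R) : Rpower 1 a = 1.
Proof. unfold Rpower. now rewrite ln_1, Rmult_0_r, exp_0. Qed.

Lemma Rpower_le_1 (x a : R) : 0 <= a -> 0 < x <= 1 -> Rpower x a <= 1.
Proof.
  intros Ha Hx. rewrite <- (Rpower_base_1 a). apply Rle_Rpower_l; lra.
Qed.

Lemma CV_radius_ge_1 (a : nat -> R) :
  (forall r, 0 <= r < 1 -> is_lim_seq (fun n => a n * r ^ n) 0) ->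
  Rbar_le 1 (CV_radius a).
Proof.
  intros Hlim.
  assert (Hr : forall r, 0 <= r < 1 -> Rbar_le r (CV_radius a)).
  { intros r Hr. apply Rbar_not_lt_le. intros Hlt.
    apply (CV_disk_outside a r); [rewrite Rabs_pos_eq by lra; exact Hlt | exact (Hlim r Hr)]. }
  pose proof (CV_radius_ge_0 a) as H0.
  destruct (CV_radius a) as [x | |]; simpl in *; [| trivial | contradiction].
  destruct (Rle_lt_dec 1 x) as [Hx | Hx]; [exact Hx |].
  specialize (Hr ((x + 1) / 2)). simpl in Hr. lra.
Qed.

Lemma Re_sum_n (x : nat -> C) (N : nat) : Re (sum_n x N) = sum_n (fun n => Re (x n)) N.
Proof.
  induction N as [| N IH]; [now rewrite !sum_O | now rewrite !sum_Sn, <- IH].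
Qed.

Lemma is_series_C_Re (x : nat -> C) (l : C) :
  @is_series C_AbsRing C_NormedModule x l -> is_series (fun n => Re (x n)) (Re l).
Proof.
  intros H. apply filterlim_locally. intros eps.
  generalize (proj1 (filterlim_locally _ _) H eps).
  apply filter_imp. intros N [HRe _].
  rewrite <- Re_sum_n. exact HRe.
Qed.

Lemma Im_sum_n (x : nat -> C) (N : nat) : Im (sum_n x N) = sum_n (fun n => Im (x n)) N.
Proof.
  induction N as [| N IH]; [now rewrite !sum_O | now rewrite !sum_Sn, <- IH].
Qed.

Lemma is_series_C_Im (x : nat -> C) (l : C) :
  @is_series C_AbsRing C_NormedModule x l -> is_series (fun n => Im (x n)) (Im l).
Proof.
  intros H. apply filterlim_locally. intros eps.
  generalize (proj1 (filterlim_locally _ _) H eps).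
  apply filter_imp. intros N [_ HIm].
  rewrite <- Im_sum_n. exact HIm.
Qed.

Lemma eval_ps_of_is_series (a : nat -> C) (w l : C) :
  @is_series C_AbsRing C_NormedModule (fun k => (a k * pow_n w k)%C) l ->
  eval_ps a w = l.
Proof.
  intros H. unfold eval_ps.
  rewrite (is_series_unique _ _ (is_series_C_Re _ _ H)),
          (is_series_unique _ _ (is_series_C_Im _ _ H)).
  now destruct l.
Qed.

Lemma Cmod_le_of_Re_mul_le (l : C) (B : R) :
  (forall u : C, Re (u * l) <= Cmod u * B) -> Cmod l <= B.
Proof.
  intros H. pose proof (Cmod_ge_0 l).
  destruct (Req_dec (Cmod l) 0) as [E | E].
  - specialize (H 1%C). rewrite Cmult_1_l, Cmod_1 in H.
    pose proof (re_le_Cmod l). pose proof (Rle_abs (- Re l)). rewrite Rabs_Ropp in *. lra.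
  - specialize (H (Cconj l)).
    replace (Re (Cconj l * l)) with (Cmod l ^ 2) in H
      by (rewrite Cmod2_alt; destruct l; simpl; ring).
    rewrite Cmod_conj in H. apply (Rmult_le_reg_l (Cmod l)); nra.
Qed.

Lemma Cmod_series_le (x : nat -> C) (l : C) (b : nat -> R) :
  @is_series C_AbsRing C_NormedModule x l ->
  (forall n, Cmod (x n) <= b n) -> ex_series b ->
  Cmod l <= Series b.
Proof.
  intros Hl Hb Hex. apply Cmod_le_of_Re_mul_le. intros u.
  assert (Hterm : forall n, Rabs (Re (u * x n)) <= Cmod u * b n).
  { intros n. eapply Rle_trans; [apply re_le_Cmod |].
    rewrite Cmod_mult. apply Rmult_le_compat_l; [apply Cmod_ge_0 | apply Hb]. }
  assert (Hexu : ex_series (fun n => Cmod u * b n)) by exact (ex_series_scal_l (V := R_NormedModule) _ _ Hex).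
  assert (Habs : ex_series (fun n => Rabs (Re (u * x n)))).
  { apply (ex_series_le (V := R_CompleteNormedModule) _ (fun n => Cmod u * b n)); [| exact Hexu].
    intros n. change (Rabs (Rabs (Re (u * x n))) <= Cmod u * b n).
    rewrite Rabs_Rabsolu. apply Hterm. }
  assert (Hul : @is_series C_AbsRing C_NormedModule (fun n => u * x n)%C (u * l)%C)
    by exact (is_series_scal u _ _ Hl).
  rewrite <- (is_series_unique _ _ (is_series_C_Re _ _ Hul)).
  eapply Rle_trans; [apply Rle_abs |].
  eapply Rle_trans; [apply Series_Rabs, Habs |].
  rewrite <- Series_scal_l. apply Series_le; [| exact Hexu].
  intros n. split; [apply Rabs_pos | apply Hterm].
Qed.

Lemma Cmod_pow_n (w : C) (k : nat) : Cmod (pow_n w k) = Cmod w ^ k.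
Proof.
  induction k as [| k IH]; simpl; [apply Cmod_1 |].
  change (Cmod (w * pow_n w k) = Cmod w * Cmod w ^ k). now rewrite Cmod_mult, IH.
Qed.

Lemma Cmod_RtoC_mult (t : R) (z : C) : 0 <= t -> Cmod (RtoC t * z) = t * Cmod z.
Proof. intros Ht. now rewrite Cmod_mult, Cmod_R, Rabs_pos_eq. Qed.

Lemma pow_n_RtoC_mult (t : R) (z : C) (k : nat) :
  pow_n (RtoC t * z)%C k = (RtoC (t ^ k) * pow_n z k)%C.
Proof.
  induction k as [| k IH]; simpl; [change (@one C_Ring) with (RtoC 1); ring |].
  change ((RtoC t * z) * pow_n (RtoC t * z) k = RtoC (t * t ^ k) * (z * pow_n z k))%C.
  rewrite IH, RtoC_mult. ring.
Qed.

Lemma eval_ps_RtoC (c : nat -> R) (x : R) :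
  eval_ps (fun k => RtoC (c k)) (RtoC x) = RtoC (PSeries c x).
Proof.
  assert (Hpow : forall k, pow_n (RtoC x) k = RtoC (x ^ k)).
  { induction k as [| k IH]; [reflexivity |].
    change (RtoC x * pow_n (RtoC x) k = RtoC (x * x ^ k))%C. now rewrite IH, RtoC_mult. }
  unfold eval_ps, PSeries, RtoC. f_equal.
  - apply Series_ext. intros k. rewrite Hpow. simpl. ring.
  - rewrite (Series_ext _ (fun _ => 0 * 0)), Series_scal_l; [ring |].
    intros k. rewrite Hpow. simpl. ring.
Qed.

Lemma Cmod_le_Rabs_Re_Im (c : C) : Cmod c <= Rabs (Re c) + Rabs (Im c).
Proof.
  pose proof (Cmod2_alt c) as H. pose proof (Cmod_ge_0 c).
  pose proof (Rabs_pos (Re c)). pose proof (Rabs_pos (Im c)).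
  rewrite <- (pow2_abs (Re c)), <- (pow2_abs (Im c)) in H. nra.
Qed.

Lemma Cmod_sum_n_le (x : nat -> C) (N : nat) :
  Cmod (sum_n x N) <= sum_n (fun k => Cmod (x k)) N.
Proof.
  induction N as [| N IH].
  - rewrite !sum_O. apply Rle_refl.
  - rewrite !sum_Sn. eapply Rle_trans; [apply Cmod_triangle |].
    change (plus ?x ?y) with (x + y). lra.
Qed.

Lemma ex_series_C_le (x : nat -> C) (b : nat -> R) :
  (forall n, Cmod (x n) <= b n) -> ex_series b ->
  @ex_series C_AbsRing C_NormedModule x.
Proof.
  intros Hb. apply (ex_series_le (V := C_CompleteNormedModule)).
  intros n. change (Cmod (x n) <= b n). apply Hb.
Qed.

Definition partial_sums (a : nat -> C) (n : nat) : C := sum_n a n.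

Section Analytic.

Variable a : nat -> C.
Hypothesis Ha : analytic_disc a.

Lemma analytic_is_series (w : C) : Cmod w < 1 ->
  @is_series C_AbsRing C_NormedModule (fun k => (a k * pow_n w k)%C) (eval_ps a w).
Proof.
  intros Hw. destruct (Ha w Hw) as [l Hl].
  now rewrite (eval_ps_of_is_series a w l Hl).
Qed.

Lemma CV_radius_Cmod_ge_1 : Rbar_le 1 (CV_radius (fun k => Cmod (a k))).
Proof.
  apply CV_radius_ge_1. intros r Hr.
  assert (Hr1 : Cmod (RtoC r) < 1) by (rewrite Cmod_R, Rabs_pos_eq; lra).
  pose proof (analytic_is_series _ Hr1) as Hs.
  pose proof (ex_series_lim_0 _ (ex_intro _ _ (is_series_C_Re _ _ Hs))) as HRe.
  pose proof (ex_series_lim_0 _ (ex_intro _ _ (is_series_C_Im _ _ Hs))) as HIm.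
  apply is_lim_seq_abs_0 in HRe. apply is_lim_seq_abs_0 in HIm.
  apply (is_lim_seq_le_le (fun _ => 0) _ (fun n =>
    Rabs (Re (a n * pow_n (RtoC r) n)) + Rabs (Im (a n * pow_n (RtoC r) n)))).
  - intros n. split.
    + apply Rmult_le_pos; [apply Cmod_ge_0 | apply pow_le; lra].
    + replace (Cmod (a n) * r ^ n) with (Cmod (a n * pow_n (RtoC r) n))
        by (rewrite Cmod_mult, Cmod_pow_n, Cmod_R, Rabs_pos_eq; lra).
      apply Cmod_le_Rabs_Re_Im.
  - apply is_lim_seq_const.
  - replace (Finite 0) with (Rbar_plus 0 0) by (simpl; f_equal; ring).
    apply is_lim_seq_plus'; assumption.
Qed.

Lemma ex_series_Cmod_pow (rho : R) : 0 <= rho < 1 ->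
  ex_series (fun k => Cmod (a k) * rho ^ k).
Proof.
  intros Hr.
  assert (Hin : Rbar_lt (Rabs rho) (CV_radius (fun k => Cmod (a k)))).
  { rewrite Rabs_pos_eq by lra. eapply Rbar_lt_le_trans; [| apply CV_radius_Cmod_ge_1]. simpl; lra. }
  apply (ex_series_ext _ _ (fun n => Rabs_pos_eq _ (Rmult_le_pos _ _ (Cmod_ge_0 _) (pow_le _ n (proj1 Hr))))).
  exact (CV_disk_inside _ _ Hin).
Qed.

Lemma ex_series_sum_n_Cmod_pow (rho : R) : 0 <= rho < 1 ->
  ex_series (fun n => sum_n (fun k => Cmod (a k)) n * rho ^ n).
Proof.
  intros Hr.
  destruct (ex_series_Cmod_pow rho Hr) as [la Hla].
  assert (Hg : is_series (fun k => rho ^ k) (/ (1 - rho)))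
    by (apply is_series_geom; rewrite Rabs_pos_eq; lra).
  assert (Habs1 : ex_series (fun n => Rabs (Cmod (a n) * rho ^ n))).
  { exists la. eapply is_series_ext; [| exact Hla]. intros n.
    symmetry. apply Rabs_pos_eq, Rmult_le_pos; [apply Cmod_ge_0 | apply pow_le; lra]. }
  assert (Habs2 : ex_series (fun n => Rabs (rho ^ n))).
  { exists (/ (1 - rho)). eapply is_series_ext; [| exact Hg]. intros n.
    symmetry. apply Rabs_pos_eq, pow_le; lra. }
  eexists. eapply is_series_ext; [| exact (is_series_mult _ _ _ _ Hla Hg Habs1 Habs2)].
  intros n. rewrite sum_n_Reals, (Rmult_comm (sum_f_R0 _ _)), scal_sum.
  apply sum_eq. intros k Hk. rewrite Rmult_assoc, <- pow_add. do 2 f_equal. lia.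
Qed.

Lemma Cmod_partial_sums_pow_le (w : C) (n : nat) :
  Cmod (partial_sums a n * pow_n w n) <= sum_n (fun k => Cmod (a k)) n * Cmod w ^ n.
Proof.
  rewrite Cmod_mult, Cmod_pow_n.
  apply Rmult_le_compat_r; [apply pow_le, Cmod_ge_0 | apply Cmod_sum_n_le].
Qed.

Lemma partial_sums_analytic : analytic_disc (partial_sums a).
Proof.
  intros w Hw. apply (ex_series_C_le _ _ (Cmod_partial_sums_pow_le w)).
  apply ex_series_sum_n_Cmod_pow. split; [apply Cmod_ge_0 | exact Hw].
Qed.

Lemma Cmod_cesaro_le (n : nat) : Cmod (cesaro a n) <= Cmod (partial_sums a n).
Proof.
  assert (Hn : 1 <= INR (S n)) by (rewrite S_INR; pose proof (pos_INR n); lra).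
  unfold cesaro. rewrite Cmod_div, Cmod_R, Rabs_pos_eq by (first [lra | intros H; apply RtoC_inj in H; lra]).
  unfold partial_sums, Rdiv. rewrite <- (Rmult_1_r (Cmod (sum_n a n))) at 2.
  apply Rmult_le_compat_l; [apply Cmod_ge_0 |].
  rewrite <- Rinv_1. apply Rinv_le_contravar; lra.
Qed.

Lemma cesaro_analytic : analytic_disc (cesaro a).
Proof.
  intros w Hw. apply (ex_series_C_le _ (fun n => sum_n (fun k => Cmod (a k)) n * Cmod w ^ n)).
  - intros n. eapply Rle_trans; [| apply Cmod_partial_sums_pow_le].
    rewrite !Cmod_mult. apply Rmult_le_compat_r; [apply Cmod_ge_0 | apply Cmod_cesaro_le].
  - apply ex_series_sum_n_Cmod_pow. split; [apply Cmod_ge_0 | exact Hw].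
Qed.

Lemma eval_ps_eq_mul_partial_sums (w : C) : Cmod w < 1 ->
  eval_ps a w = ((1 - w) * eval_ps (partial_sums a) w)%C.
Proof.
  intros Hw. destruct (partial_sums_analytic w Hw) as [g Hg].
  rewrite (eval_ps_of_is_series _ _ _ Hg). apply eval_ps_of_is_series.
  set (y := fun n => match n with
                     | O => RtoC 0
                     | S k => (w * (partial_sums a k * pow_n w k))%C
                     end).
  assert (Hy : @is_series C_AbsRing C_NormedModule y (w * g)%C).
  { apply is_series_decr_1.
    match goal with |- is_series _ ?L => replace L with (w * g)%C end;
      [| change (w * g = w * g + - RtoC 0)%C; ring].
    exact (is_series_scal w _ _ Hg). }
  replace ((1 - w) * g)%C with (plus g (opp (w * g)%C)) by (change (g + - (w * g) = (1 - w) * g)%C; ring).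
  eapply is_series_ext; [| exact (is_series_minus _ _ _ _ Hg Hy)].
  intros [| k]; simpl; change (@one C_Ring) with (RtoC 1); unfold partial_sums.
  - rewrite sum_O. change (a O * 1 + - RtoC 0 = a O * 1)%C. ring.
  - rewrite sum_Sn.
    change ((sum_n a k + a (S k)) * (w * pow_n w k) + - (w * (sum_n a k * pow_n w k))
            = a (S k) * (w * pow_n w k))%C.
    ring.
Qed.

End Analytic.

Section CesaroPrimitive.

Variable a : nat -> C.
Hypothesis Ha : analytic_disc a.
Variables z u : C.
Hypothesis Hz : Cmod z < 1.

(* With [g = eval_ps (partial_sums a) = f / (1 - w)], [PSeries (PS_Int d) t] equals
   [t Re (u cesaro a (t z))] and is the integral of [Re (u g (s z))] over [0, t]: this
   power series replaces the integral formula for the Cesaro operator. *)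
Let d (n : nat) : R := Re (u * (partial_sums a n * pow_n z n)).

Lemma CV_radius_cesaro_terms_gt_1 : Rbar_lt 1 (CV_radius d).
Proof.
  set (r := Cmod z). set (s := 2 / (1 + r)).
  assert (Hr : 0 <= r < 1) by (split; [apply Cmod_ge_0 | exact Hz]).
  assert (Hs : 1 < s) by (unfold s; apply Rlt_div_r; lra).
  assert (Hrs : 0 <= r * s < 1).
  { unfold s. split; [apply Rmult_le_pos, Rlt_le, Rdiv_lt_0_compat; lra |].
    replace (r * (2 / (1 + r))) with (2 * r / (1 + r)) by (field; lra).
    apply Rlt_div_l; lra. }
  assert (Hdisk : CV_disk d s).
  { apply (ex_series_le (V := R_CompleteNormedModule) _
      (fun n => Cmod u * (Cmod (partial_sums a n) * (r * s) ^ n))).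
    - intros n. change (Rabs (Rabs (d n * s ^ n)) <= Cmod u * (Cmod (partial_sums a n) * (r * s) ^ n)).
      rewrite Rabs_Rabsolu, Rabs_mult, (Rabs_pos_eq (s ^ n)) by (apply pow_le; lra).
      rewrite Rpow_mult_distr, <- !Rmult_assoc.
      apply Rmult_le_compat_r; [apply pow_le; lra |].
      unfold r. rewrite <- Cmod_pow_n, Rmult_assoc, <- !Cmod_mult.
      apply re_le_Cmod.
    - apply (ex_series_scal_l (V := R_NormedModule)).
      exact (ex_series_Cmod_pow _ (partial_sums_analytic a Ha) _ Hrs). }
  eapply Rbar_lt_le_trans; [| exact (proj1 (Lub_Rbar_correct (CV_disk d)) s Hdisk)].
  exact Hs.
Qed.

Lemma is_derive_cesaro_primitive (t : R) : Rabs t <= 1 ->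
  is_derive (PSeries (PS_Int d)) t (PSeries d t).
Proof.
  intros Ht.
  assert (Hin : Rbar_lt (Rabs t) (CV_radius (PS_Int d))).
  { rewrite CV_radius_Int. eapply Rbar_le_lt_trans; [| apply CV_radius_cesaro_terms_gt_1]. exact Ht. }
  rewrite <- (PSeries_ext (PS_derive (PS_Int d))).
  - exact (is_derive_PSeries _ _ Hin).
  - intros n. unfold PS_derive, PS_Int. field. apply not_0_INR. lia.
Qed.

Lemma cesaro_primitive_1 : PSeries (PS_Int d) 1 = Re (u * eval_ps (cesaro a) z).
Proof.
  pose proof (analytic_is_series _ (cesaro_analytic a Ha) z Hz) as H.
  assert (Hu : @is_series C_AbsRing C_NormedModule (fun n => u * (cesaro a n * pow_n z n))%C
                 (u * eval_ps (cesaro a) z)%C) by exact (is_series_scal u _ _ H).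
  rewrite <- (is_series_unique _ _ (is_series_C_Re _ _ Hu)).
  unfold PSeries. rewrite Series_incr_1_aux by (simpl; ring).
  apply Series_ext. intros n. unfold PS_Int, d, cesaro.
  assert (Hn : INR (S n) <> 0) by (apply not_0_INR; lia).
  rewrite pow1, Rmult_1_r. unfold Cdiv. rewrite <- (RtoC_inv _ Hn).
  replace (u * (sum_n a n * RtoC (/ INR (S n)) * pow_n z n))%C
    with (RtoC (/ INR (S n)) * (u * (partial_sums a n * pow_n z n)))%C by (unfold partial_sums; ring).
  rewrite re_scal_l. unfold Rdiv. apply Rmult_comm.
Qed.

Lemma PSeries_cesaro_terms (t : R) : 0 <= t <= 1 ->
  PSeries d t = Re (u * eval_ps (partial_sums a) (RtoC t * z)).
Proof.
  intros Ht.
  assert (Hw : Cmod (RtoC t * z) < 1).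
  { rewrite Cmod_RtoC_mult by lra.
    pose proof (mul_unit_interval t (Cmod z) Ht (conj (Cmod_ge_0 z) Hz)). lra. }
  pose proof (analytic_is_series _ (partial_sums_analytic a Ha) _ Hw) as H.
  assert (Hu : @is_series C_AbsRing C_NormedModule
                 (fun n => u * (partial_sums a n * pow_n (RtoC t * z) n))%C
                 (u * eval_ps (partial_sums a) (RtoC t * z))%C) by exact (is_series_scal u _ _ H).
  rewrite <- (is_series_unique _ _ (is_series_C_Re _ _ Hu)).
  apply Series_ext. intros n. rewrite pow_n_RtoC_mult.
  replace (u * (partial_sums a n * (RtoC (t ^ n) * pow_n z n)))%C
    with (RtoC (t ^ n) * (u * (partial_sums a n * pow_n z n)))%C by ring.
  rewrite re_scal_l. apply Rmult_comm.
Qed.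

Lemma Re_cesaro_le (F F' : R -> R) :
  (forall t, 0 <= t <= 1 -> is_derive F t (F' t)) ->
  (forall t, 0 <= t <= 1 -> Re (u * eval_ps (partial_sums a) (RtoC t * z)) <= F' t) ->
  Re (u * eval_ps (cesaro a) z) <= F 1 - F 0.
Proof.
  intros HF Hle.
  rewrite <- cesaro_primitive_1.
  replace (PSeries (PS_Int d) 1) with (PSeries (PS_Int d) 1 - PSeries (PS_Int d) 0)
    by (rewrite PSeries_0; simpl; ring).
  apply (le_sub_of_is_derive_le _ _ (PSeries d) F'); [lra | | exact HF |].
  - intros t Ht. apply is_derive_cesaro_primitive. rewrite Rabs_pos_eq; lra.
  - intros t Ht. rewrite PSeries_cesaro_terms by exact Ht. apply Hle, Ht.
Qed.

Lemma Re_cesaro_eq (F : R -> R) :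
  (forall t, 0 <= t <= 1 -> is_derive F t (Re (u * eval_ps (partial_sums a) (RtoC t * z)))) ->
  Re (u * eval_ps (cesaro a) z) = F 1 - F 0.
Proof.
  intros HF.
  rewrite <- cesaro_primitive_1.
  replace (PSeries (PS_Int d) 1) with (PSeries (PS_Int d) 1 - PSeries (PS_Int d) 0)
    by (rewrite PSeries_0; simpl; ring).
  apply (eq_sub_of_is_derive_eq _ _ (PSeries d)); [lra | |].
  - intros t Ht. apply is_derive_cesaro_primitive. rewrite Rabs_pos_eq; lra.
  - intros t Ht. rewrite PSeries_cesaro_terms by exact Ht. apply HF, Ht.
Qed.

End CesaroPrimitive.

Lemma Cmod_partial_sums_le (a : nat -> C) (alpha M : R) (w : C) :
  analytic_disc a -> Cmod w < 1 ->
  Rpower (1 - Cmod w ^ 2) alpha * Cmod (eval_ps a w) <= M ->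
  Cmod (eval_ps (partial_sums a) w) <= M * Rpower (1 - Cmod w ^ 2) (- alpha) / (1 - Cmod w).
Proof.
  intros Ha Hw HM.
  set (g := eval_ps (partial_sums a) w). set (P := Rpower (1 - Cmod w ^ 2) alpha).
  assert (HP : 0 < P) by apply exp_pos.
  assert (H1w : 1 - Cmod w <= Cmod (1 - w)).
  { pose proof (Cmod_triangle (1 - w) w) as T.
    replace (1 - w + w)%C with (RtoC 1) in T by ring. rewrite Cmod_1 in T. lra. }
  rewrite (eval_ps_eq_mul_partial_sums a Ha w Hw), Cmod_mult in HM. fold g in HM.
  rewrite Rpower_Ropp. fold P.
  apply (Rmult_le_reg_l (P * (1 - Cmod w))); [apply Rmult_lt_0_compat; lra |].
  replace (P * (1 - Cmod w) * (M * / P / (1 - Cmod w))) with M by (field; lra).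
  fold P in HM. eapply Rle_trans; [| exact HM]. rewrite Rmult_assoc.
  apply Rmult_le_compat_l; [lra |]. apply Rmult_le_compat_r; [apply Cmod_ge_0 | exact H1w].
Qed.

Lemma is_derive_weight_primitive (alpha r t : R) : 0 < alpha -> (t * r) ^ 2 < 1 ->
  is_derive (fun t => t * Rpower (1 - (t * r) ^ 2) (- alpha) / alpha) t
    (Rpower (1 - (t * r) ^ 2) (- alpha) * (/ alpha + 2 * (t * r) ^ 2 / (1 - (t * r) ^ 2))).
Proof.
  intros Hal Ht. unfold Rpower. auto_derive; [lra |].
  replace (1 + - (t * r * (t * r * 1))) with (1 - (t * r) ^ 2) by ring.
  field. split; lra.
Qed.

Lemma inv_one_sub_le_weight (alpha s : R) : 0 < alpha <= 1 / 2 -> 0 <= s < 1 ->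
  / (1 - s) <= / alpha + 2 * s ^ 2 / (1 - s ^ 2).
Proof.
  intros Hal Hs.
  assert (Hia : 2 <= / alpha).
  { apply (Rmult_le_reg_r alpha); [lra |]. rewrite Rinv_l by lra. lra. }
  replace (/ (1 - s)) with (1 / (1 - s)) by (field; lra).
  apply (Rmult_le_reg_r (1 - s ^ 2)); [nra |].
  replace (1 / (1 - s) * (1 - s ^ 2)) with (1 + s) by (field; lra).
  replace ((/ alpha + 2 * s ^ 2 / (1 - s ^ 2)) * (1 - s ^ 2)) with (/ alpha * (1 - s ^ 2) + 2 * s ^ 2)
    by (field; nra).
  assert (0 <= (/ alpha - 2) * (1 - s ^ 2)) by (apply Rmult_le_pos; nra).
  nra.
Qed.

Lemma Cmod_partial_sums_le_weight (a : nat -> C) (alpha M : R) (w : C) :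
  analytic_disc a -> 0 < alpha <= 1 / 2 -> Cmod w < 1 -> 0 <= M ->
  Rpower (1 - Cmod w ^ 2) alpha * Cmod (eval_ps a w) <= M ->
  Cmod (eval_ps (partial_sums a) w)
  <= M * (Rpower (1 - Cmod w ^ 2) (- alpha) * (/ alpha + 2 * Cmod w ^ 2 / (1 - Cmod w ^ 2))).
Proof.
  intros Ha Hal Hw HM0 HM.
  eapply Rle_trans; [exact (Cmod_partial_sums_le a alpha M w Ha Hw HM) |].
  assert (HP : 0 < Rpower (1 - Cmod w ^ 2) (- alpha)) by apply exp_pos.
  unfold Rdiv. rewrite Rmult_assoc. apply Rmult_le_compat_l; [exact HM0 |].
  apply Rmult_le_compat_l; [lra |].
  apply inv_one_sub_le_weight; [exact Hal | split; [apply Cmod_ge_0 | exact Hw]].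
Qed.

Lemma Re_cesaro_weighted_le (a : nat -> C) (alpha M : R) (z u : C) :
  analytic_disc a -> 0 < alpha <= 1 / 2 -> Cmod z < 1 -> 0 <= M ->
  (forall w, Cmod w < 1 -> Rpower (1 - Cmod w ^ 2) alpha * Cmod (eval_ps a w) <= M) ->
  Re (u * eval_ps (cesaro a) z) <= Cmod u * (M * Rpower (1 - Cmod z ^ 2) (- alpha) / alpha).
Proof.
  intros Ha Hal Hz HM0 HM. set (r := Cmod z). set (K := Cmod u * M).
  assert (Hr : 0 <= r < 1) by (split; [apply Cmod_ge_0 | exact Hz]).
  replace (Cmod u * (M * Rpower (1 - r ^ 2) (- alpha) / alpha))
    with (K * (1 * Rpower (1 - (1 * r) ^ 2) (- alpha) / alpha)
          - K * (0 * Rpower (1 - (0 * r) ^ 2) (- alpha) / alpha))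
    by (unfold K; replace (1 * r) with r by ring; field; lra).
  apply (Re_cesaro_le a Ha z u Hz
    (fun t => K * (t * Rpower (1 - (t * r) ^ 2) (- alpha) / alpha))
    (fun t => K * (Rpower (1 - (t * r) ^ 2) (- alpha) * (/ alpha + 2 * (t * r) ^ 2 / (1 - (t * r) ^ 2)))));
    intros t Ht; pose proof (mul_unit_interval t r Ht Hr) as Htr.
  - apply (is_derive_scal (fun t => t * Rpower (1 - (t * r) ^ 2) (- alpha) / alpha)).
    apply is_derive_weight_primitive; [lra | nra].
  - assert (Hw : Cmod (RtoC t * z) < 1) by (rewrite Cmod_RtoC_mult; [fold r |]; lra).
    pose proof (Cmod_partial_sums_le_weight a alpha M _ Ha Hal Hw HM0 (HM _ Hw)) as Hg.
    rewrite Cmod_RtoC_mult in Hg by lra. fold r in Hg.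
    eapply Rle_trans; [apply Rle_trans with (1 := Rle_abs _), re_le_Cmod |].
    rewrite Cmod_mult. unfold K. rewrite Rmult_assoc.
    apply Rmult_le_compat_l; [apply Cmod_ge_0 | exact Hg].
Qed.

Lemma Cmod_cesaro_weighted_le (a : nat -> C) (alpha M : R) (z : C) :
  analytic_disc a -> 0 < alpha <= 1 / 2 -> Cmod z < 1 ->
  (forall w, Cmod w < 1 -> Rpower (1 - Cmod w ^ 2) alpha * Cmod (eval_ps a w) <= M) ->
  Rpower (1 - Cmod z ^ 2) alpha * Cmod (eval_ps (cesaro a) z) <= M / alpha.
Proof.
  intros Ha Hal Hz HM.
  assert (HM0 : 0 <= M).
  { assert (H0 : Cmod 0 < 1) by (rewrite Cmod_0; lra).
    eapply Rle_trans; [| exact (HM _ H0)].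
    apply Rmult_le_pos; [apply Rlt_le, exp_pos | apply Cmod_ge_0]. }
  pose proof (Cmod_le_of_Re_mul_le _ _ (fun u => Re_cesaro_weighted_le a alpha M z u Ha Hal Hz HM0 HM))
    as Hc.
  rewrite Rpower_Ropp in Hc. set (P := Rpower (1 - Cmod z ^ 2) alpha) in *.
  assert (HP : 0 < P) by apply exp_pos.
  apply (Rmult_le_compat_l P) in Hc; [| lra].
  replace (M / alpha) with (P * (M * / P / alpha)) by (field; lra).
  exact Hc.
Qed.

(* Taylor coefficients of 2^-alpha (1 - z)^-alpha. *)
Fixpoint extremal_coef (alpha : R) (n : nat) : R :=
  match n with
  | O => Rpower 2 (- alpha)
  | S k => extremal_coef alpha k * (INR k + alpha) / (INR k + 1)
  end.

Definition extremal (alpha : R) (k : nat) : C := RtoC (extremal_coef alpha k).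

Section Extremal.

Variable alpha : R.
Hypothesis Hal : 0 < alpha <= 1.

Local Notation c := (extremal_coef alpha).

Lemma extremal_coef_pos (n : nat) : 0 < c n.
Proof.
  induction n as [| n IH]; simpl; [apply exp_pos |].
  pose proof (pos_INR n). apply Rdiv_lt_0_compat; [apply Rmult_lt_0_compat |]; lra.
Qed.

Lemma extremal_coef_le (n : nat) : c n <= c O.
Proof.
  induction n as [| n IH]; [apply Rle_refl |].
  eapply Rle_trans; [| exact IH]. simpl. pose proof (pos_INR n). pose proof (extremal_coef_pos n).
  unfold Rdiv. rewrite Rmult_assoc. rewrite <- (Rmult_1_r (c n)) at 2.
  apply Rmult_le_compat_l; [lra |].
  apply (Rmult_le_reg_r (INR n + 1)); [lra |]. rewrite Rmult_assoc, Rinv_l by lra. lra.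
Qed.

Lemma extremal_coef_succ (n : nat) : INR (S n) * c (S n) = (INR n + alpha) * c n.
Proof. cbn [extremal_coef]. rewrite S_INR. pose proof (pos_INR n). field. lra. Qed.

Lemma ex_series_extremal_coef_pow (rho : R) : 0 <= rho < 1 -> ex_series (fun n => c n * rho ^ n).
Proof.
  intros Hr.
  apply (ex_series_le (V := R_CompleteNormedModule) _ (fun n => c O * rho ^ n)).
  - intros n. change (Rabs (c n * rho ^ n) <= c O * rho ^ n).
    rewrite Rabs_pos_eq by (apply Rmult_le_pos; [apply Rlt_le, extremal_coef_pos | apply pow_le; lra]).
    apply Rmult_le_compat_r; [apply pow_le; lra | apply extremal_coef_le].
  - apply (ex_series_scal_l (V := R_NormedModule)), ex_series_geom. rewrite Rabs_pos_eq; lra.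
Qed.

Lemma CV_radius_extremal_coef : Rbar_le 1 (CV_radius c).
Proof.
  apply CV_radius_ge_1. intros r Hr. apply ex_series_lim_0, ex_series_extremal_coef_pow, Hr.
Qed.

Lemma extremal_coef_ode (t : R) : Rabs t < 1 ->
  (1 - t) * PSeries (PS_derive c) t = alpha * PSeries c t.
Proof.
  intros Ht.
  assert (Hin : Rbar_lt (Rabs t) (CV_radius c))
    by (eapply Rbar_lt_le_trans; [| apply CV_radius_extremal_coef]; exact Ht).
  assert (Hin' : Rbar_lt (Rabs t) (CV_radius (PS_derive c))) by (rewrite CV_radius_derive; exact Hin).
  assert (E : PSeries (PS_derive c) t
              = PSeries (PS_plus (PS_incr_1 (PS_derive c)) (PS_scal alpha c)) t).
  { apply PSeries_ext. intros n. unfold PS_plus, PS_scal, PS_incr_1, PS_derive.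
    change (plus ?x ?y) with (x + y). change (scal ?x ?y) with (x * y).
    destruct n as [| k]; rewrite extremal_coef_succ; [simpl; change zero with 0 |]; ring. }
  rewrite PSeries_plus, PSeries_incr_1, PSeries_scal in E.
  - lra.
  - apply CV_radius_inside. rewrite CV_radius_incr_1. exact Hin'.
  - apply CV_radius_inside. rewrite CV_radius_scal by lra. exact Hin.
Qed.

Lemma PSeries_extremal_coef (rho : R) : 0 <= rho < 1 ->
  PSeries c rho = Rpower 2 (- alpha) * Rpower (1 - rho) (- alpha).
Proof.
  intros Hr.
  set (h := fun t => Rpower (1 - t) alpha * PSeries c t).
  assert (Hh : forall t, 0 <= t <= rho -> is_derive h t 0).
  { intros t Ht.
    assert (Ht1 : Rabs t < 1) by (rewrite Rabs_pos_eq; lra).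
    assert (HE : is_derive (fun t => Rpower (1 - t) alpha) t (- alpha * Rpower (1 - t) alpha / (1 - t))).
    { unfold Rpower. auto_derive; [lra |]. replace (1 + - t) with (1 - t) by ring. field. lra. }
    assert (HP := is_derive_PSeries c t
      (Rbar_lt_le_trans (Rabs t) 1 _ Ht1 CV_radius_extremal_coef)).
    assert (Hm := is_derive_mult _ _ _ _ _ HE HP (fun x y => Rmult_comm x y)).
    replace 0 with (plus (mult (- alpha * Rpower (1 - t) alpha / (1 - t)) (PSeries c t))
                         (mult (Rpower (1 - t) alpha) (PSeries (PS_derive c) t))); [exact Hm |].
    change (plus ?x ?y) with (x + y). change (mult ?x ?y) with (x * y).
    pose proof (extremal_coef_ode t Ht1) as Hode.
    replace (PSeries (PS_derive c) t) with (alpha * PSeries c t / (1 - t)) by (rewrite <- Hode; field; lra).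
    match goal with |- ?L = _ => enough (E : L = 0) by exact E end.
    field. lra. }
  assert (Hconst := eq_sub_of_is_derive_eq h (fun _ => 0) (fun _ => 0) 0 rho (proj1 Hr) Hh
    (fun t _ => is_derive_const 0 t)).
  unfold h in Hconst. rewrite PSeries_0, Rminus_0_r, Rpower_base_1 in Hconst.
  rewrite (Rpower_Ropp (1 - rho)). cbn [extremal_coef] in Hconst.
  pose proof (exp_pos (alpha * ln (1 - rho))) as HP. fold (Rpower (1 - rho) alpha) in HP.
  apply (Rmult_eq_reg_l (Rpower (1 - rho) alpha)); [| lra].
  rewrite (Rmult_comm (Rpower 2 (- alpha))), <- Rmult_assoc, Rinv_r, Rmult_1_l; lra.
Qed.

Lemma Cmod_extremal_term (w : C) (k : nat) :
  Cmod (extremal alpha k * pow_n w k) = c k * Cmod w ^ k.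
Proof.
  rewrite Cmod_mult, Cmod_pow_n. unfold extremal.
  now rewrite Cmod_R, Rabs_pos_eq by apply Rlt_le, extremal_coef_pos.
Qed.

Lemma extremal_analytic : analytic_disc (extremal alpha).
Proof.
  intros w Hw. apply (ex_series_C_le _ (fun k => c k * Cmod w ^ k)).
  - intros k. rewrite Cmod_extremal_term. apply Rle_refl.
  - apply ex_series_extremal_coef_pow. split; [apply Cmod_ge_0 | exact Hw].
Qed.

Lemma extremal_weighted_le_1 (w : C) : Cmod w < 1 ->
  Rpower (1 - Cmod w ^ 2) alpha * Cmod (eval_ps (extremal alpha) w) <= 1.
Proof.
  intros Hw. set (rho := Cmod w).
  assert (Hr : 0 <= rho < 1) by (split; [apply Cmod_ge_0 | exact Hw]).
  assert (Hf : Cmod (eval_ps (extremal alpha) w) <= PSeries c rho).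
  { apply (Cmod_series_le _ _ _ (analytic_is_series _ extremal_analytic w Hw)).
    - intros k. rewrite Cmod_extremal_term. apply Rle_refl.
    - apply ex_series_extremal_coef_pow, Hr. }
  rewrite PSeries_extremal_coef in Hf by exact Hr.
  eapply Rle_trans; [apply Rmult_le_compat_l; [apply Rlt_le, exp_pos | exact Hf] |].
  replace (1 - rho ^ 2) with ((1 + rho) / 2 * 2 * (1 - rho)) by field.
  rewrite <- (Rpower_mult_distr ((1 + rho) / 2 * 2)), <- (Rpower_mult_distr ((1 + rho) / 2)) by lra.
  rewrite !Rpower_Ropp.
  assert (H2 : 0 < Rpower 2 alpha) by apply exp_pos.
  assert (H1 : 0 < Rpower (1 - rho) alpha) by apply exp_pos.
  replace (Rpower ((1 + rho) / 2) alpha * Rpower 2 alpha * Rpower (1 - rho) alpha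
           * (/ Rpower 2 alpha * / Rpower (1 - rho) alpha))
    with (Rpower ((1 + rho) / 2) alpha) by (field; lra).
  apply Rpower_le_1; lra.
Qed.

Lemma Re_partial_sums_extremal (x : R) : 0 <= x < 1 ->
  Re (eval_ps (partial_sums (extremal alpha)) (RtoC x))
  = Rpower 2 (- alpha) * Rpower (1 - x) (- alpha) / (1 - x).
Proof.
  intros Hx.
  assert (Hx1 : Cmod (RtoC x) < 1) by (rewrite Cmod_R, Rabs_pos_eq; lra).
  pose proof (eval_ps_eq_mul_partial_sums _ extremal_analytic _ Hx1) as H.
  unfold extremal at 1 in H. rewrite eval_ps_RtoC, PSeries_extremal_coef in H by exact Hx.
  rewrite <- RtoC_minus in H. apply (f_equal Re) in H. rewrite re_scal_l, re_RtoC in H.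
  rewrite H. field. lra.
Qed.

Lemma Re_cesaro_extremal (r : R) : 0 < r < 1 ->
  Re (eval_ps (cesaro (extremal alpha)) (RtoC r))
  = Rpower 2 (- alpha) * (Rpower (1 - r) (- alpha) - 1) / (alpha * r).
Proof.
  intros Hr.
  assert (Hr1 : Cmod (RtoC r) < 1) by (rewrite Cmod_R, Rabs_pos_eq; lra).
  rewrite <- (Cmult_1_l (eval_ps (cesaro _) _)).
  set (F := fun t => Rpower 2 (- alpha) * Rpower (1 - t * r) (- alpha) / (alpha * r)).
  replace (Rpower 2 (- alpha) * (Rpower (1 - r) (- alpha) - 1) / (alpha * r)) with (F 1 - F 0)
    by (unfold F; rewrite Rmult_0_l, Rmult_1_l, Rminus_0_r, Rpower_base_1; field; lra).
  apply (Re_cesaro_eq _ extremal_analytic _ _ Hr1).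
  intros t Ht. rewrite Cmult_1_l, <- RtoC_mult, Re_partial_sums_extremal by (apply mul_unit_interval; lra).
  unfold F, Rpower. auto_derive; [nra |].
  replace (1 + - (t * r)) with (1 - t * r) by ring. field. repeat split; nra.
Qed.

Lemma extremal_cesaro_weighted_ge (r : R) : 0 < r < 1 ->
  (1 - Rpower (1 - r) alpha) ^ 2 / alpha
  <= Rpower (1 - r ^ 2) alpha * Re (eval_ps (cesaro (extremal alpha)) (RtoC r)).
Proof.
  intros Hr. rewrite Re_cesaro_extremal by exact Hr.
  set (x := Rpower (1 - r) alpha). set (q := Rpower ((1 + r) / 2) alpha).
  assert (Hx : 1 - r <= x <= 1).
  { split; [apply le_Rpower_self; lra |].
    apply Rpower_le_1; lra. }
  assert (Hq : (1 + r) / 2 <= q) by (apply le_Rpower_self; lra).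
  assert (E : Rpower (1 - r ^ 2) alpha * (Rpower 2 (- alpha) * (Rpower (1 - r) (- alpha) - 1) / (alpha * r))
              = q / r * (1 - x) / alpha).
  { replace (1 - r ^ 2) with ((1 - r) * ((1 + r) / 2 * 2)) by field.
    rewrite <- (Rpower_mult_distr (1 - r)), <- (Rpower_mult_distr ((1 + r) / 2)) by lra.
    rewrite !Rpower_Ropp. fold x q.
    assert (HZ : 0 < Rpower 2 alpha) by apply exp_pos.
    assert (Hx0 : 0 < x) by apply exp_pos.
    field. split; lra. }
  rewrite E. unfold Rdiv. apply Rmult_le_compat_r; [apply Rlt_le, Rinv_0_lt_compat; lra |].
  replace ((1 - x) ^ 2) with ((1 - x) * (1 - x)) by ring. apply Rmult_le_compat_r; [lra |].
  apply (Rmult_le_reg_r r); [lra |]. rewrite Rmult_assoc, Rinv_l, Rmult_1_r by lra. nra.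
Qed.

End Extremal.

Lemma korenblum_norm_ge (alpha : R) (a : nat -> C) (w : C) : Cmod w < 1 ->
  Rbar_le (Rpower (1 - Cmod w ^ 2) alpha * Cmod (eval_ps a w)) (korenblum_norm alpha a).
Proof.
  intros Hw. apply (proj1 (Lub_Rbar_correct _)). now exists w.
Qed.

Lemma korenblum_norm_le (alpha B : R) (a : nat -> C) :
  (forall w, Cmod w < 1 -> Rpower (1 - Cmod w ^ 2) alpha * Cmod (eval_ps a w) <= B) ->
  Rbar_le (korenblum_norm alpha a) B.
Proof.
  intros H. apply (proj2 (Lub_Rbar_correct _)). intros x [w [Hw ->]]. exact (H w Hw).
Qed.

Lemma korenblum_norm_nonneg (alpha : R) (a : nat -> C) : Rbar_le 0 (korenblum_norm alpha a).
Proof.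
  assert (H0 : Cmod 0 < 1) by (rewrite Cmod_0; lra).
  eapply Rbar_le_trans; [| exact (korenblum_norm_ge alpha a _ H0)].
  apply Rmult_le_pos; [apply Rlt_le, exp_pos | apply Cmod_ge_0].
Qed.

Lemma korenblum_norm_cesaro_le (alpha : R) (a : nat -> C) :
  0 < alpha <= 1 / 2 -> analytic_disc a -> Rbar_lt (korenblum_norm alpha a) p_infty ->
  Rbar_le (korenblum_norm alpha (cesaro a)) (Rbar_mult (1 / alpha) (korenblum_norm alpha a)).
Proof.
  intros Hal Ha Hfin.
  pose proof (korenblum_norm_ge alpha a) as Hge. pose proof (korenblum_norm_nonneg alpha a) as H0.
  destruct (korenblum_norm alpha a) as [M | |]; simpl in Hfin, H0; try contradiction.
  simpl. replace (1 / alpha * M) with (M / alpha) by (field; lra).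
  apply korenblum_norm_le. intros w Hw.
  apply Cmod_cesaro_weighted_le; [exact Ha | exact Hal | exact Hw |].
  intros w' Hw'. exact (Hge w' Hw').
Qed.

Lemma korenblum_norm_cesaro_le_inv (alpha : R) (a : nat -> C) :
  0 < alpha <= 1 / 2 -> analytic_disc a -> Rbar_le (korenblum_norm alpha a) 1 ->
  Rbar_le (korenblum_norm alpha (cesaro a)) (1 / alpha).
Proof.
  intros Hal Ha Hn.
  assert (Hfin : Rbar_lt (korenblum_norm alpha a) p_infty) by (eapply Rbar_le_lt_trans; [exact Hn | easy]).
  pose proof (korenblum_norm_cesaro_le alpha a Hal Ha Hfin) as H.
  pose proof (korenblum_norm_nonneg alpha a) as H0.
  destruct (korenblum_norm alpha a) as [M | |]; simpl in Hn, H0, H; try contradiction.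
  eapply Rbar_le_trans; [exact H |]. simpl.
  rewrite <- (Rmult_1_r (1 / alpha)) at 2. apply Rmult_le_compat_l; [| exact Hn].
  apply Rlt_le, Rdiv_lt_0_compat; lra.
Qed.

Lemma korenblum_norm_extremal_le_1 (alpha : R) : 0 < alpha <= 1 ->
  Rbar_le (korenblum_norm alpha (extremal alpha)) 1.
Proof.
  intros Hal. apply korenblum_norm_le, extremal_weighted_le_1, Hal.
Qed.

Lemma korenblum_norm_cesaro_extremal_ge (alpha eta : R) : 0 < alpha <= 1 -> 0 < eta < 1 ->
  Rbar_le ((1 - eta) ^ 2 * (1 / alpha)) (korenblum_norm alpha (cesaro (extremal alpha))).
Proof.
  intros Hal Heta.
  (* chosen so that [(1 - r)^alpha = eta] *)
  set (r := 1 - Rpower eta (/ alpha)).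
  assert (Hr : 0 < r < 1).
  { assert (0 < Rpower eta (/ alpha)) by apply exp_pos.
    assert (Rpower eta (/ alpha) < 1).
    { rewrite <- (Rpower_base_1 (/ alpha)). apply Rlt_Rpower_l; [apply Rinv_0_lt_compat |]; lra. }
    unfold r. lra. }
  assert (Hrz : Cmod (RtoC r) < 1) by (rewrite Cmod_R, Rabs_pos_eq; lra).
  eapply Rbar_le_trans; [| exact (korenblum_norm_ge _ _ _ Hrz)]. cbn [Rbar_le].
  rewrite Cmod_R, Rabs_pos_eq by lra.
  replace eta with (Rpower (1 - r) alpha).
  - eapply Rle_trans; [| apply Rmult_le_compat_l; [apply Rlt_le, exp_pos | apply re_le_Cmod]].
    eapply Rle_trans; [| apply Rmult_le_compat_l; [apply Rlt_le, exp_pos | apply Rle_abs]].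
    replace ((1 - Rpower (1 - r) alpha) ^ 2 * (1 / alpha)) with ((1 - Rpower (1 - r) alpha) ^ 2 / alpha)
      by (unfold Rdiv; ring).
    apply extremal_cesaro_weighted_ge; assumption.
  - unfold r. replace (1 - (1 - Rpower eta (/ alpha))) with (Rpower eta (/ alpha)) by ring.
    rewrite Rpower_mult, Rinv_l, Rpower_1; lra.
Qed.

Lemma korenblum_norm_cesaro_extremal (alpha : R) : 0 < alpha <= 1 / 2 ->
  korenblum_norm alpha (cesaro (extremal alpha)) = 1 / alpha.
Proof.
  intros Hal. assert (Hal1 : 0 < alpha <= 1) by lra.
  pose proof (korenblum_norm_cesaro_le_inv alpha _ Hal (extremal_analytic alpha Hal1)
                (korenblum_norm_extremal_le_1 alpha Hal1)) as Hup.
  pose proof (korenblum_norm_cesaro_extremal_ge alpha (1 / 2) Hal1 ltac:(lra)) as Hhalf.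
  pose proof (fun eta => korenblum_norm_cesaro_extremal_ge alpha eta Hal1) as Hlow.
  destruct (korenblum_norm alpha (cesaro (extremal alpha))) as [L | |];
    simpl in Hup, Hhalf; try contradiction.
  f_equal. apply Rle_antisym; [exact Hup |].
  apply le_of_forall_one_sub_sq_mul_le. exact Hlow.
Qed.

Theorem theorem3p1 (alpha : R) (halpha0 : 0 < alpha) (halpha1 : alpha <= 1 / 2) :
  (forall a : nat -> C, analytic_disc a ->
     Rbar_lt (korenblum_norm alpha a) p_infty ->
     analytic_disc (cesaro a) /\
     Rbar_le (korenblum_norm alpha (cesaro a))
             (Rbar_mult (Finite (1 / alpha)) (korenblum_norm alpha a))) /\
  cesaro_opnorm alpha = Finite (1 / alpha).
Proof.
  assert (Hal : 0 < alpha <= 1 / 2) by lra.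
  split.
  - intros a Ha Hfin. split; [apply cesaro_analytic, Ha |].
    apply korenblum_norm_cesaro_le; assumption.
  - apply is_lub_Rbar_unique. split.
    + intros x [a [Ha [Hn Hx]]]. rewrite <- Hx.
      apply korenblum_norm_cesaro_le_inv; assumption.
    + intros b Hb. apply Hb. exists (extremal alpha). split; [| split].
      * apply extremal_analytic. lra.
      * apply korenblum_norm_extremal_le_1. lra.
      * apply korenblum_norm_cesaro_extremal, Hal.
Qed.
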